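(* Let $I$ be a connected and locally connected topological space and $h:I\to\mathbb{R}$ a positive continuous function attaining its lower bound at $v\in I$. For $y,z\in I$ define $$\lambda(y,z)=\sup\{\lambda : C_{y,\lambda}=C_{z,\lambda},\ \lambda\le h(y),\ \lambda\le h(z)\}.$$ Then for fixed $y$ the function $z\mapsto\lambda(y,z)$ is lower semi-continuous: for every $z_0\in I$, $$\liminf_{z\to z_0}\lambda(y,z)\ge\lambda(y,z_0).$$
   Context: For $x\in I$ and $\lambda\le h(x)$, $C_{x,\lambda}$ denotes the maximal connected subset of $\{y\in I: h(y)\ge\lambda\}$ containing $x$. *)

From HB Require Import structures.
From mathcomp Require Import all_boot all_order all_algebra.
From mathcomp Require Import all_classical all_reals all_analysis.
Set Implicit Arguments. Unset Strict Implicit. Unset Printing Implicit Defensive.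
Import Order.TTheory GRing.Theory Num.Theory numFieldNormedType.Exports.
Local Open Scope classical_set_scope.
Local Open Scope ring_scope.

Definition locally_connected (T : topologicalType) : Prop :=
  forall (x : T) (U : set T), nbhs x U ->
    exists2 V : set T, [/\ open V, V x & connected V] & V `<=` U.

(* C_{x,l}: the maximal connected subset of {y | h y >= l} containing x
   (meaningful for l <= h x). *)
Definition Ccomp (T : topologicalType) (R : realType) (h : T -> R)
  (x : T) (l : R) : set T :=
  connected_component [set y | l <= h y] x.

Definition lam (T : topologicalType) (R : realType) (h : T -> R)
  (y z : T) : R :=
  sup [set l : R | [/\ Ccomp h y l = Ccomp h z l, l <= h y & l <= h z]].

From HB Require Import structures.
From mathcomp Require Import all_boot all_order all_algebra.
From mathcomp Require Import all_classical all_reals all_analysis.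
Set Implicit Arguments. Unset Strict Implicit. Unset Printing Implicit Defensive.
Import Order.TTheory GRing.Theory Num.Theory numFieldNormedType.Exports.
Local Open Scope classical_set_scope.
Local Open Scope ring_scope.

(* If [lam y z0 > a], pick a level [l > a] at which [y] and [z0] share a
   component, and an intermediate level [l'] with [a < l' < l].  By local
   connectedness and continuity, [C_{z0,l'}] is a neighbourhood of [z0]; every
   [z] in it shares its [l']-component with [z0], hence with [y], since
   components only grow when the level decreases.  So [lam y z >= l' > a]. *)

Lemma connected_componentS (T : topologicalType) (A B : set T) (x : T) :
  A x -> A `<=` B -> connected_component A x `<=` connected_component B x.
Proof.
move=> Ax AB; apply: connected_component_max.
- exact: connected_component_refl.
- by move=> w /connected_component_sub /AB.
- exact: component_connected.
Qed.

Section level_components.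
Variables (T : topologicalType) (R : realType) (h : T -> R).

Lemma Ccomp_le (x : T) (l' l : R) :
  l' <= l -> l <= h x -> Ccomp h x l `<=` Ccomp h x l'.
Proof. by move=> l'l lx; apply: connected_componentS => // w /(le_trans l'l). Qed.

Lemma Ccomp_eq_le (y z : T) (l' l : R) : l' <= l -> l <= h y -> l <= h z ->
  Ccomp h y l = Ccomp h z l -> Ccomp h y l' = Ccomp h z l'.
Proof.
move=> l'l ly lz Eyz.
have zy : Ccomp h z l y by rewrite -Eyz; exact: connected_component_refl.
by apply/esym; exact: same_connected_component (Ccomp_le l'l lz zy).
Qed.

Lemma Ccomp_min (v x : T) : (forall w, h v <= h w) -> connected [set: T] ->
  Ccomp h x (h v) = [set: T].
Proof.
move=> hmin Tconn; rewrite /Ccomp.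
have -> : [set w | h v <= h w] = [set: T] by apply/seteqP; split=> // w _ /=.
exact: connected_component_id.
Qed.

Lemma nbhs_Ccomp (z : T) (l : R) : locally_connected T -> continuous h ->
  l < h z -> nbhs z (Ccomp h z l).
Proof.
move=> Tlconn hcont lz.
have hgt : nbhs z [set x | l < h x].
  apply: (hcont z [set r | l < r]); apply: open_nbhs_nbhs.
  by split=> //; exact: open_gt.
have [V [oV Vz cV] Vgt] := Tlconn z _ hgt.
apply: (filterS _ (open_nbhs_nbhs (conj oV Vz))).
by apply: connected_component_max => // x /Vgt /ltW.
Qed.

Lemma lam_ge (y z : T) (l : R) : l <= h y -> l <= h z ->
  Ccomp h y l = Ccomp h z l -> l <= lam h y z.
Proof. by move=> ly lz Eyz; apply: ub_le_sup => //; exists (h y) => r []. Qed.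

(* [sup] of an empty set is junk; the level [h v] keeps the defining set of
   [lam] nonempty, since there the only component is the whole space. *)
Lemma lam_gtP (v y z : T) (a : R) :
  (forall w, h v <= h w) -> connected [set: T] -> a < lam h y z ->
  exists2 l, [/\ Ccomp h y l = Ccomp h z l, l <= h y & l <= h z] & a < l.
Proof.
move=> hmin Tconn; apply: sup_gt; exists (h v).
by split; rewrite ?hmin // !(Ccomp_min _ hmin Tconn).
Qed.

End level_components.

Theorem mainTheorem7 (I : topologicalType) (R : realType) (h : I -> R) (v : I)
  (I_conn : connected [set: I]) (I_lconn : locally_connected I)
  (h_cont : continuous h) (h_pos : forall x, 0 < h x)
  (h_min : forall x, h v <= h x) (y : I) :
  lower_semicontinuous (fun z : I => ((lam h y z)%:E : \bar R)).
Proof.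
move=> z0 a; rewrite lte_fin => /(lam_gtP h_min I_conn)[l [Eyz0 ly lz0] al].
have [al' l'l] := midf_lt al; set l' := (a + l) / 2 in al' l'l.
exists (Ccomp h z0 l'); first exact: nbhs_Ccomp (lt_le_trans l'l lz0).
move=> z z0z; have l'z : l' <= h z := connected_component_sub z0z.
have Eyz : Ccomp h y l' = Ccomp h z l'.
  rewrite (Ccomp_eq_le (ltW l'l) ly lz0 Eyz0).
  exact: same_connected_component z0z.
by rewrite lte_fin (lt_le_trans al') // lam_ge // (le_trans (ltW l'l) ly).
Qed.
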